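(* Let $\boldsymbol\beta=(\beta_1,\dots,\beta_N)\in(0,\infty)^N$ and $v\in\mathbb R$ with $\beta_i+v>0$ for all $i$. For any $u_0\in(-\min_i\beta_i,\infty)$ there exist an open disk $U\subset\mathbb C$ containing $u_0$ and constants $C,r>0$ such that for all $u\in U$ and all $\boldsymbol X=(\boldsymbol X_1,\boldsymbol X_2)\in\mathbb R^{2N}$, $$\big|H^{\boldsymbol\beta,u,v}(\boldsymbol X)\big|\le C\exp\Big(-r\Big(\sum_{j=1}^N|X_1(j)|+\sum_{j=1}^N|X_2(j)|\Big)\Big).$$
   Context: For $\theta\in\mathbb C$ let $f_\theta(x)=e^{-\theta x-e^{-x}}$. For $\boldsymbol X_i=(X_i(1),\dots,X_i(N))\in\mathbb R^N$, $i=1,2$, and $u\in\mathbb C$, $$H^{\boldsymbol\beta,u,v}(\boldsymbol X)=\Big(\sum_{j=1}^Ne^{-\sum_{i=j+1}^NX_2(i)-\sum_{i=1}^{j-1}X_1(i)}\Big)^{-(u+v)}\prod_{j=1}^Nf_{\beta_j+v}(X_1(j))f_{\beta_j+u}(X_2(j)),$$ where for $S>0$ and complex $w$, $S^{w}=e^{w\log S}$. *)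

From Stdlib Require Import Reals.
From Coquelicot Require Import Coquelicot.
Open Scope R_scope.

Definition Cexp (z : C) : C :=
  (exp (Re z) * cos (Im z), exp (Re z) * sin (Im z)).

Definition cpow (S : R) (w : C) : C := Cexp (w * RtoC (ln S)).

Definition ftheta (theta : C) (x : R) : C :=
  Cexp (- (theta * RtoC x) - RtoC (exp (- x))).

Fixpoint Cprod1 (N : nat) (F : nat -> C) : C :=
  match N with
  | O => 1%C
  | S n => (Cprod1 n F * F (S n))%C
  end.

(* H^{beta,u,v}(X1,X2); vectors are indexed 1..N (values elsewhere unused). *)
Definition Hfun (N : nat) (beta : nat -> R) (u : C) (v : R)
    (X1 X2 : nat -> R) : C :=
  (cpow (sum_n_m (fun j => exp (- sum_n_m X2 (S j) N - sum_n_m X1 1 (j - 1))) 1 N)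
        (- (u + RtoC v))
   * Cprod1 N (fun j => ftheta (RtoC (beta j + v)) (X1 j)
                        * ftheta (RtoC (beta j) + u) (X2 j)))%C.

(* |H| = exp (-(Re u + v) ln S + sum_j (log f_{beta_j+v}(X1 j) + log f_{beta_j+Re u}(X2 j)))
   with S = hsum N X1 X2. Keeping only the first, resp. last, term of S bounds -ln S by
   sum X2, resp. sum X1, up to the negative parts of the coordinates, while
   ln S <= ln N + (negative parts). For a = Re u + v > 0, a convex combination with weight t
   of the two lower bounds turns -a ln S into a shift of the linear rates to
   beta_j + v - a (1 - t) and beta_j + Re u - a t; choosing t from the smallest beta_k keeps
   both positive uniformly near u0. Each coordinate then decays linearly as x -> +oo and
   doubly exponentially as x -> -oo, which absorbs the negative parts. *)

From Stdlib Require Import Reals Lra Lia.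
From Coquelicot Require Import Coquelicot.
Open Scope R_scope.

Lemma exp_le_compat x y : x <= y -> exp x <= exp y.
Proof. intros [Hlt | ->]; [now left; apply exp_increasing | right; reflexivity]. Qed.

Lemma ln_INR_ge0 n : (0 < n)%nat -> 0 <= ln (INR n).
Proof.
intros Hn. rewrite <- ln_1. apply ln_le; [lra |].
change 1 with (INR 1). apply le_INR. lia.
Qed.

Lemma exists_argmin_range (f : nat -> R) N : (0 < N)%nat ->
  exists k, (1 <= k <= N)%nat /\ forall i, (1 <= i <= N)%nat -> f k <= f i.
Proof.
induction N as [| N IH]; intros HN; [lia |].
destruct (Nat.eq_dec N 0) as [-> | HN0].
- exists 1%nat. split; [lia |]. intros i Hi. replace i with 1%nat by lia. lra.
- destruct IH as [k [Hk Hmin]]; [lia |].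
  destruct (Rle_or_lt (f k) (f (S N))) as [Hle | Hlt].
  + exists k. split; [lia |]. intros i Hi.
    destruct (Nat.eq_dec i (S N)) as [-> | Hne]; [lra | apply Hmin; lia].
  + exists (S N). split; [lia |]. intros i Hi.
    destruct (Nat.eq_dec i (S N)) as [-> | Hne]; [lra |].
    specialize (Hmin i ltac:(lia)). lra.
Qed.

Lemma sum_n_m_Rplus (f g : nat -> R) n m :
  sum_n_m (fun k => f k + g k) n m = sum_n_m f n m + sum_n_m g n m.
Proof. exact (sum_n_m_plus f g n m). Qed.

Lemma sum_n_m_Rmult_l a (f : nat -> R) n m :
  sum_n_m (fun k => a * f k) n m = a * sum_n_m f n m.
Proof. exact (sum_n_m_mult_l a f n m). Qed.

Lemma sum_n_m_le_loc (f g : nat -> R) n m :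
  (forall k, (n <= k <= m)%nat -> f k <= g k) -> sum_n_m f n m <= sum_n_m g n m.
Proof.
intros Hfg. induction m as [| m IH].
- destruct n as [| n].
  + rewrite !sum_n_n. apply Hfg. lia.
  + rewrite !sum_n_m_zero by lia. apply Rle_refl.
- destruct (Nat.le_gt_cases n (S m)) as [Hn | Hn].
  + destruct (Nat.eq_dec n (S m)) as [-> | Hne].
    * rewrite !sum_n_n. apply Hfg. lia.
    * rewrite !sum_n_Sm by lia. apply Rplus_le_compat.
      -- apply IH. intros k Hk. apply Hfg. lia.
      -- apply Hfg. lia.
  + rewrite !sum_n_m_zero by lia. apply Rle_refl.
Qed.

Lemma sum_n_m_nonneg (f : nat -> R) n m : (forall k, 0 <= f k) -> 0 <= sum_n_m f n m.
Proof.
intros Hf. apply Rle_trans with (sum_n_m (fun _ => 0) n m).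
- rewrite sum_n_m_const, Rmult_0_r. apply Rle_refl.
- apply sum_n_m_le, Hf.
Qed.

Lemma sum_n_m_le_subrange (f : nat -> R) n n' m' m :
  (forall k, 0 <= f k) -> (n <= n')%nat -> (m' <= m)%nat ->
  sum_n_m f n' m' <= sum_n_m f n m.
Proof.
intros Hf Hn Hm.
destruct (Nat.le_gt_cases n' m') as [Hnm | Hnm];
  [| rewrite sum_n_m_zero by lia; apply sum_n_m_nonneg, Hf].
induction Hm as [| m Hm IH].
- induction Hn as [| n' Hn IH]; [apply Rle_refl |].
  eapply Rle_trans; [| apply IH; lia].
  rewrite (sum_Sn_m f n') by lia. change (plus ?a ?b) with (a + b).
  pose proof (Hf n'). lra.
- rewrite sum_n_Sm by lia. change (plus ?a ?b) with (a + b).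
  pose proof (Hf (S m)). lra.
Qed.

Lemma sum_n_m_term_le (f : nat -> R) n m i :
  (forall k, 0 <= f k) -> (n <= i <= m)%nat -> f i <= sum_n_m f n m.
Proof.
intros Hf Hi. rewrite <- (sum_n_n f i). apply sum_n_m_le_subrange; [exact Hf | lia | lia].
Qed.

Definition log_ftheta (p x : R) : R := - p * x - exp (- x).

Definition hsum (N : nat) (X1 X2 : nat -> R) : R :=
  sum_n_m (fun j => exp (- sum_n_m X2 (S j) N - sum_n_m X1 1 (j - 1))) 1 N.

Lemma Cmod_Cexp z : Cmod (Cexp z) = exp (Re z).
Proof.
unfold Cexp, Cmod; cbn [fst snd].
replace ((exp (Re z) * cos (Im z)) ^ 2 + (exp (Re z) * sin (Im z)) ^ 2)
  with (exp (Re z) ^ 2) by (pose proof (sin2_cos2 (Im z)); unfold Rsqr in *; nra).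
apply sqrt_pow2. left; apply exp_pos.
Qed.

Lemma Cmod_cpow S w : Cmod (cpow S w) = exp (Re w * ln S).
Proof. unfold cpow. rewrite Cmod_Cexp. f_equal. unfold Re; simpl; ring. Qed.

Lemma Cmod_ftheta theta x : Cmod (ftheta theta x) = exp (log_ftheta (Re theta) x).
Proof. unfold ftheta, log_ftheta. rewrite Cmod_Cexp. f_equal. unfold Re; simpl; ring. Qed.

Lemma Cmod_Cprod1 N (F : nat -> C) (g : nat -> R) :
  (forall j, Cmod (F j) = exp (g j)) -> Cmod (Cprod1 N F) = exp (sum_n_m g 1 N).
Proof.
intros HF. induction N as [| N IH]; simpl.
- rewrite sum_n_m_zero by lia. rewrite Cmod_1. symmetry. apply exp_0.
- rewrite Cmod_mult, IH, HF, <- exp_plus, sum_n_Sm by lia. reflexivity.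
Qed.

Lemma Cmod_Hfun N beta u v X1 X2 :
  Cmod (Hfun N beta u v X1 X2) =
  exp (- (Re u + v) * ln (hsum N X1 X2)
       + sum_n_m (fun j => log_ftheta (beta j + v) (X1 j)
                           + log_ftheta (beta j + Re u) (X2 j)) 1 N).
Proof.
unfold Hfun. rewrite Cmod_mult, Cmod_cpow, exp_plus. f_equal.
apply Cmod_Cprod1. intros j.
rewrite Cmod_mult, !Cmod_ftheta, <- exp_plus. reflexivity.
Qed.

Definition negpart (x : R) : R := Rmax 0 (- x).

Lemma negpart_ge0 x : 0 <= negpart x.
Proof. apply Rmax_l. Qed.

Lemma Ropp_le_negpart x : - x <= negpart x.
Proof. apply Rmax_r. Qed.

Lemma Ropp_sum_le_sum_negpart (X : nat -> R) n m :
  - sum_n_m X n m <= sum_n_m (fun k => negpart (X k)) n m.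
Proof.
assert (H : 0 <= sum_n_m (fun k => X k + negpart (X k)) n m).
{ apply sum_n_m_nonneg. intros k. pose proof (Ropp_le_negpart (X k)). lra. }
rewrite sum_n_m_Rplus in H. lra.
Qed.

Lemma log_ftheta_negpart_le d p B m x :
  d <= p -> 0 <= B -> p + B + d <= m ->
  log_ftheta p x + B * negpart x <= m ^ 2 - d * Rabs x.
Proof.
intros Hdp HB Hm. unfold log_ftheta, negpart.
pose proof (exp_pos (- x)) as Hexp.
destruct (Rle_or_lt 0 x) as [Hx | Hx].
- rewrite Rabs_right, Rmax_left by lra. nra.
- rewrite Rabs_left, Rmax_right by lra.
  assert (Hhalf : 0 < - x / 2 < exp (- x / 2)).
  { pose proof (exp_ineq1_le (- x / 2)). lra. }
  assert (Hsq : (- x / 2) ^ 2 <= exp (- x)).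
  { replace (- x) with (- x / 2 + - x / 2) at 2 by field.
    rewrite exp_plus. nra. }
  assert (Hlin : (p + B + d) * - x <= m * - x) by (apply Rmult_le_compat_r; lra).
  pose proof (pow2_ge_0 (m - - x / 2)).
  nra.
Qed.

Section HsumBounds.

Variables (N : nat) (X1 X2 : nat -> R).
Hypothesis HN : (0 < N)%nat.

Let T j := exp (- sum_n_m X2 (S j) N - sum_n_m X1 1 (j - 1)).
Let P1 := sum_n_m (fun j => negpart (X1 j)) 1 N.
Let P2 := sum_n_m (fun j => negpart (X2 j)) 1 N.

Lemma hsum_term_le j : (1 <= j <= N)%nat -> T j <= hsum N X1 X2.
Proof.
intros Hj. apply sum_n_m_term_le; [intros k; left; apply exp_pos | exact Hj].
Qed.

Lemma hsum_pos : 0 < hsum N X1 X2.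
Proof. eapply Rlt_le_trans; [apply exp_pos | apply (hsum_term_le 1); lia]. Qed.

Lemma ln_hsum_le : ln (hsum N X1 X2) <= ln (INR N) + P1 + P2.
Proof.
assert (Hle : hsum N X1 X2 <= INR N * exp (P1 + P2)).
{ unfold hsum. replace (INR N) with (INR (S N - 1)) by (f_equal; lia).
  rewrite <- sum_n_m_const. apply sum_n_m_le_loc. intros j Hj.
  apply exp_le_compat.
  pose proof (Ropp_sum_le_sum_negpart X2 (S j) N).
  pose proof (Ropp_sum_le_sum_negpart X1 1 (j - 1)).
  assert (sum_n_m (fun k => negpart (X2 k)) (S j) N <= P2)
    by (apply sum_n_m_le_subrange; [intros; apply negpart_ge0 | lia | lia]).
  assert (sum_n_m (fun k => negpart (X1 k)) 1 (j - 1) <= P1)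
    by (apply sum_n_m_le_subrange; [intros; apply negpart_ge0 | lia | lia]).
  lra. }
apply ln_le in Hle; [| apply hsum_pos].
rewrite ln_mult, ln_exp in Hle; [lra | apply lt_0_INR; lia | apply exp_pos].
Qed.

Lemma Ropp_ln_hsum_le_X2 : - ln (hsum N X1 X2) <= sum_n_m X2 1 N + P2.
Proof.
assert (HT : ln (T 1) <= ln (hsum N X1 X2))
  by (apply ln_le; [apply exp_pos | apply hsum_term_le; lia]).
unfold T in HT. rewrite Nat.sub_diag, ln_exp, (sum_n_m_zero X1 1 0) in HT by lia.
rewrite (sum_Sn_m X2 1 N) by lia. change (plus ?a ?b) with (a + b).
pose proof (Ropp_le_negpart (X2 1%nat)).
assert (negpart (X2 1%nat) <= P2)
  by (apply (sum_n_m_term_le (fun k => negpart (X2 k))); [intros; apply negpart_ge0 | lia]).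
change (@zero R_AbelianMonoid) with 0 in HT. lra.
Qed.

Lemma Ropp_ln_hsum_le_X1 : - ln (hsum N X1 X2) <= sum_n_m X1 1 N + P1.
Proof.
assert (HT : ln (T N) <= ln (hsum N X1 X2))
  by (apply ln_le; [apply exp_pos | apply hsum_term_le; lia]).
unfold T in HT. rewrite ln_exp, (sum_n_m_zero X2 (S N) N) in HT by lia.
destruct N as [| N']; [lia |].
rewrite (sum_n_Sm X1 1 N') by lia. change (plus ?a ?b) with (a + b).
replace (S N' - 1)%nat with N' in HT by lia.
pose proof (Ropp_le_negpart (X1 (S N'))).
assert (negpart (X1 (S N')) <= P1)
  by (apply (sum_n_m_term_le (fun k => negpart (X1 k))); [intros; apply negpart_ge0 | lia]).
change (@zero R_AbelianMonoid) with 0 in HT. lra.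
Qed.

Lemma Ropp_mul_ln_hsum_le a t : 0 <= t <= 1 ->
  - a * ln (hsum N X1 X2)
  <= Rabs a * (ln (INR N) + P1 + P2)
     + Rmax 0 a * ((1 - t) * sum_n_m X1 1 N + t * sum_n_m X2 1 N).
Proof.
intros Ht.
pose proof ln_hsum_le as Hup.
pose proof Ropp_ln_hsum_le_X1 as Hlow1.
pose proof Ropp_ln_hsum_le_X2 as Hlow2.
assert (HP1 : 0 <= P1) by (apply sum_n_m_nonneg; intros; apply negpart_ge0).
assert (HP2 : 0 <= P2) by (apply sum_n_m_nonneg; intros; apply negpart_ge0).
pose proof (ln_INR_ge0 N HN).
destruct (Rle_or_lt 0 a) as [Ha | Ha].
- rewrite Rabs_right, Rmax_right by lra.
  assert (Hconv : - ln (hsum N X1 X2)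
                  <= (1 - t) * sum_n_m X1 1 N + t * sum_n_m X2 1 N + (P1 + P2)).
  { assert ((1 - t) * - ln (hsum N X1 X2) <= (1 - t) * (sum_n_m X1 1 N + P1))
      by (apply Rmult_le_compat_l; lra).
    assert (t * - ln (hsum N X1 X2) <= t * (sum_n_m X2 1 N + P2))
      by (apply Rmult_le_compat_l; lra).
    nra. }
  apply Rmult_le_compat_l with (r := a) in Hconv; [| exact Ha].
  assert (0 <= a * ln (INR N)) by (apply Rmult_le_pos; lra).
  lra.
- rewrite Rabs_left, Rmax_left by lra.
  apply Rmult_le_compat_l with (r := - a) in Hup; lra.
Qed.

Lemma log_Hfun_le (p q : nat -> R) a t d A M :
  0 <= t <= 1 -> Rabs a <= A ->
  (forall i, (1 <= i <= N)%nat ->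
     d <= p i - Rmax 0 a * (1 - t) /\ d <= q i - Rmax 0 a * t /\ p i <= M /\ q i <= M) ->
  - a * ln (hsum N X1 X2)
  + sum_n_m (fun j => log_ftheta (p j) (X1 j) + log_ftheta (q j) (X2 j)) 1 N
  <= A * ln (INR N) + 2 * INR N * (M + A + d) ^ 2
     - d * (sum_n_m (fun j => Rabs (X1 j)) 1 N + sum_n_m (fun j => Rabs (X2 j)) 1 N).
Proof.
intros Ht HA Hrates.
set (ap := Rmax 0 a).
assert (Hap : 0 <= ap) by apply Rmax_l.
assert (Hcoord :
  sum_n_m (fun j => log_ftheta (p j) (X1 j) + log_ftheta (q j) (X2 j)
                    + ap * (1 - t) * X1 j + ap * t * X2 j
                    + A * negpart (X1 j) + A * negpart (X2 j)) 1 N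
  <= sum_n_m (fun j => 2 * (M + A + d) ^ 2 + - d * Rabs (X1 j) + - d * Rabs (X2 j)) 1 N).
{ apply sum_n_m_le_loc. intros j Hj.
  destruct (Hrates j Hj) as (Hp & Hq & HpM & HqM).
  assert (0 <= ap * (1 - t)) by (apply Rmult_le_pos; lra).
  assert (0 <= ap * t) by (apply Rmult_le_pos; lra).
  pose proof (Rabs_pos a).
  pose proof (log_ftheta_negpart_le d (p j - ap * (1 - t)) A (M + A + d) (X1 j)
                Hp ltac:(lra) ltac:(lra)).
  pose proof (log_ftheta_negpart_le d (q j - ap * t) A (M + A + d) (X2 j)
                Hq ltac:(lra) ltac:(lra)).
  unfold log_ftheta in *. lra. }
rewrite !sum_n_m_Rplus, !sum_n_m_Rmult_l, sum_n_m_const in Hcoord.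
replace (INR (S N - 1)) with (INR N) in Hcoord by (f_equal; lia).
pose proof (Ropp_mul_ln_hsum_le a t Ht) as Hln. fold ap in Hln.
assert (HP1 : 0 <= P1) by (apply sum_n_m_nonneg; intros; apply negpart_ge0).
assert (HP2 : 0 <= P2) by (apply sum_n_m_nonneg; intros; apply negpart_ge0).
pose proof (ln_INR_ge0 N HN).
assert (Rabs a * (ln (INR N) + P1 + P2) <= A * (ln (INR N) + P1 + P2))
  by (apply Rmult_le_compat_r; lra).
rewrite sum_n_m_Rplus. unfold P1, P2 in *. lra.
Qed.

End HsumBounds.

Lemma uniform_rates (bk v u0 : R) : 0 < bk -> 0 < bk + v -> 0 < bk + u0 ->
  exists t d, 0 <= t <= 1 /\ 0 < d /\
    forall b ur, bk <= b -> Rabs (ur - u0) < d / 2 ->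
      d <= b + v - Rmax 0 (ur + v) * (1 - t) /\ d <= b + ur - Rmax 0 (ur + v) * t.
Proof.
intros Hbk Hv Hu0.
set (s := bk + v + (bk + u0)).
set (t := (bk + u0) / s).
set (a0 := Rmax 0 (u0 + v)).
set (D := s - a0).
set (m := Rmin t (1 - t)).
assert (Hts : t * s = bk + u0) by (unfold t; field; unfold s; lra).
assert (Hs : 0 < s) by (unfold s; lra).
assert (Ht : 0 < t < 1) by (unfold s in *; split; nra).
assert (HD : 0 < D).
{ unfold D, a0, s. destruct (Rle_or_lt 0 (u0 + v)).
  - rewrite Rmax_right by lra. lra.
  - rewrite Rmax_left by lra. lra. }
assert (Hm : 0 < m /\ m <= t /\ m <= 1 - t).
{ unfold m. repeat split; [apply Rmin_pos | apply Rmin_l | apply Rmin_r]; lra. }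
exists t, (D * m / 2). split; [lra |]. split; [apply Rmult_lt_0_compat; [| lra]; nra |].
intros b ur Hb Hur.
apply Rabs_def2 in Hur.
assert (Ha : Rmax 0 (ur + v) <= a0 + D * m / 4).
{ apply Rmax_lub; unfold a0; [| pose proof (Rmax_r 0 (u0 + v))];
    pose proof (Rmax_l 0 (u0 + v)); nra. }
(* At u = u0 the margins are (1 - t) D and t D; moving u by less than D m / 4
   costs at most half of each. *)
assert (Hp : (a0 + D * m / 4) * (1 - t) + D * m / 2 <= bk + v).
{ replace (bk + v) with ((1 - t) * s) by (unfold s in *; lra).
  unfold D in *. nra. }
assert (Hq : (a0 + D * m / 4) * t + D * m / 2 + D * m / 4 <= bk + u0).
{ rewrite <- Hts. unfold D in *. nra. }
pose proof (Rmax_l 0 (ur + v)).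
split; nra.
Qed.

Theorem lemma3p22 (N : nat) (beta : nat -> R) (v : R)
  (hN : (0 < N)%nat)
  (hbeta : forall i, (1 <= i <= N)%nat -> 0 < beta i)
  (hbv : forall i, (1 <= i <= N)%nat -> 0 < beta i + v)
  (u0 : R)
  (hu0 : forall i, (1 <= i <= N)%nat -> - beta i < u0) :
  exists (c : C) (rho : R), 0 < rho /\ Cmod (RtoC u0 - c) < rho /\
  exists Cst r : R, 0 < Cst /\ 0 < r /\
    forall u : C, Cmod (u - c) < rho ->
    forall X1 X2 : nat -> R,
      Cmod (Hfun N beta u v X1 X2)
      <= Cst * exp (- r * (sum_n_m (fun j => Rabs (X1 j)) 1 N
                           + sum_n_m (fun j => Rabs (X2 j)) 1 N)).
Proof.
destruct (exists_argmin_range beta N hN) as [k [Hk Hmin]].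
assert (Hku0 : 0 < beta k + u0) by (specialize (hu0 k Hk); lra).
destruct (uniform_rates (beta k) v u0 (hbeta k Hk) (hbv k Hk) Hku0)
  as (t & d & Ht & Hd & Hrates).
set (A := Rabs u0 + d / 2 + Rabs v).
set (M := sum_n_m (fun j => Rabs (beta j)) 1 N + A).
exists (RtoC u0), (d / 2). split; [lra |]. split.
{ replace (RtoC u0 - RtoC u0)%C with (RtoC 0) by (apply injective_projections; simpl; ring).
  rewrite Cmod_0. lra. }
exists (exp (A * ln (INR N) + 2 * INR N * (M + A + d) ^ 2)), d.
split; [apply exp_pos |]. split; [exact Hd |].
intros u Hu X1 X2.
assert (Hur : Rabs (Re u - u0) < d / 2).
{ change (Re u - u0) with (Re (u - RtoC u0)).
  eapply Rle_lt_trans; [apply re_le_Cmod | exact Hu]. }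
assert (HuA : Rabs (Re u) <= Rabs u0 + d / 2).
{ replace (Re u) with (u0 + (Re u - u0)) by ring.
  eapply Rle_trans; [apply Rabs_triang | lra]. }
rewrite Cmod_Hfun, <- exp_plus, <- (Ropp_mult_distr_l d). apply exp_le_compat.
apply (log_Hfun_le N X1 X2 hN) with (t := t); [exact Ht | |].
- eapply Rle_trans; [apply Rabs_triang | unfold A; lra].
- intros i Hi.
  assert (Hbi : Rabs (beta i) <= sum_n_m (fun j => Rabs (beta j)) 1 N)
    by (apply (sum_n_m_term_le (fun j => Rabs (beta j))); [intros; apply Rabs_pos | exact Hi]).
  destruct (Hrates (beta i) (Re u) (Hmin i Hi) Hur) as [Hp Hq].
  pose proof (Rle_abs (beta i)). pose proof (Rle_abs v). pose proof (Rle_abs (Re u)).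
  pose proof (Rabs_pos u0). pose proof (Rabs_pos v).
  unfold M, A. repeat split; lra.
Qed.
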